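(* Assume $\mathcal E$ is stable under pullback and $\mathcal F\subseteq\mathcal E$. Let $c$ be a closure operator on $\mathcal A$ such that every object of $\mathcal A$ is $c$-separated. If $X\in\mathcal X$ is such that $R$ preserves products with $X$ (i.e. $\rho_{X\times Y}=\rho_X\times\rho_Y$ for every $Y\in\mathcal X$), then $X$ is $c^\rho$-compact if and only if $\rho_X\in\mathcal E$ and $RX$ is $c$-compact.
   Context: Standing setting. $\mathcal X$ and $\mathcal A$ are finitely complete categories; $\mathcal X$ carries a proper factorization system $(\mathcal E,\mathcal M)$ and $\mathcal A$ a proper factorization system $(\mathcal F,\mathcal N)$ (proper: every member of $\mathcal E$, resp. $\mathcal F$, is an epimorphism and every member of $\mathcal M$, resp. $\mathcal N$, is a monomorphism). $\mathcal A$ is a full reflective subcategory of $\mathcal X$ with reflector $R:\mathcal X\to\mathcal A$ and reflection (unit) $\rho_X:X\to RX$; as in the paper's setting, $\mathcal N\subseteq\mathcal M$ and $R\mathcal E\subseteq\mathcal F$. For $X\in\mathcal X$, $\operatorname{sub}X$ is the class $\mathcal M/X$ of $\mathcal M$-morphisms with codomain $X$, preordered by $m\le n$ iff $m=nj$ for some morphism $j$; for $A\in\mathcal A$, $\operatorname{sub}_{\mathcal A}A=\mathcal N/A$ with the same preorder. For $f:X\to Y$ and $m\in\operatorname{sub}X$, the image $f(m)\in\operatorname{sub}Y$ is the $\mathcal M$-part of the $(\mathcal E,\mathcal M)$-factorization of $fm$, and for $n\in\operatorname{sub}Y$ the preimage $f^{-1}(n)\in\operatorname{sub}X$ is the pullback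 of $n$ along $f$ (analogously in $\mathcal A$ using $(\mathcal F,\mathcal N)$). A closure operator $c$ on $\mathcal A$ (with respect to $\mathcal N$) is a family of maps $c_A:\operatorname{sub}_{\mathcal A}A\to\operatorname{sub}_{\mathcal A}A$ ($A\in\mathcal A$) such that $m\le c_A(m)$, $m\le n\Rightarrow c_A(m)\le c_A(n)$, and $f(c_A(m))\le c_B(f(m))$ for every morphism $f:A\to B$ of $\mathcal A$; closure operators on $\mathcal X$ (with respect to $\mathcal M$) are defined likewise. For an arbitrary morphism $g:M\to A$ of $\mathcal A$, write $g(1_M)$ for the $\mathcal N$-part of its $(\mathcal F,\mathcal N)$-factorization and put $c_A(g):=c_A(g(1_M))$. The $R$-initial lift of $c$ is the closure operator $c^\rho$ on $\mathcal X$ given by $c^\rho_X(m)=\rho_X^{-1}(c_{RX}(Rm))$ for $X\in\mathcal X$, $m\in\operatorname{sub}X$. A subobject $m$ is $c$-closed if $c(m)=m$; an object $A$ is $c$-separated if its diagonal $\delta_A:A\to A\times A$ is $c$-closed. For a closure operator $d$ on a category, an object $X$ is $d$-compact if for every object $Y$ the projection $\pi_Y:X\times Y\to Y$ is $d$-preserving, i.e. $\pi_Y(d_{X\times Y}(m))=d_Y(\pi_Y(m))$ for every subobject $m$ of $X\times Y$ (for $c$-compactness of an object of $\mathcal A$, $Y$ ranges over $\mathcal A$ and subobjects over $\operatorname{sub}_{\mathcal A}$; for $c^\rho$-compactness, over $\mathcal X$ and $\operatorname{sub}$). *)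

Set Implicit Arguments.
Unset Strict Implicit.
Set Universe Polymorphism.

Record Cat : Type := {
  Ob :> Type;
  Hom : Ob -> Ob -> Type;
  cid : forall a, Hom a a;
  comp : forall a b c, Hom b c -> Hom a b -> Hom a c;
  comp_idl : forall a b (f : Hom a b), comp (cid b) f = f;
  comp_idr : forall a b (f : Hom a b), comp f (cid a) = f;
  comp_assoc : forall a b c d (f : Hom a b) (g : Hom b c) (h : Hom c d),
      comp h (comp g f) = comp (comp h g) f }.
Arguments Hom {_} _ _.
Arguments cid {_} _.
Arguments comp {_ _ _ _} _ _.
Notation "g ∘ f" := (comp g f) (at level 40, left associativity).

Definition is_iso (C : Cat) (a b : C) (f : Hom a b) : Prop :=
  exists g : Hom b a, g ∘ f = cid a /\ f ∘ g = cid b.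

Record FinLim (C : Cat) : Type := {
  term : C;
  to_term : forall a : C, Hom a term;
  to_term_uniq : forall (a : C) (f g : Hom a term), f = g;
  prod : C -> C -> C;
  pr1 : forall a b : C, Hom (prod a b) a;
  pr2 : forall a b : C, Hom (prod a b) b;
  pair : forall z a b : C, Hom z a -> Hom z b -> Hom z (prod a b);
  pair_pr1 : forall z a b (f : Hom z a) (g : Hom z b), pr1 a b ∘ pair f g = f;
  pair_pr2 : forall z a b (f : Hom z a) (g : Hom z b), pr2 a b ∘ pair f g = g;
  pair_uniq : forall z a b (h k : Hom z (prod a b)),
      pr1 a b ∘ h = pr1 a b ∘ k -> pr2 a b ∘ h = pr2 a b ∘ k -> h = k;
  pb : forall a b c : C, Hom a c -> Hom b c -> C;
  pb1 : forall a b c (f : Hom a c) (g : Hom b c), Hom (pb f g) a;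
  pb2 : forall a b c (f : Hom a c) (g : Hom b c), Hom (pb f g) b;
  pb_comm : forall a b c (f : Hom a c) (g : Hom b c), f ∘ pb1 f g = g ∘ pb2 f g;
  pb_pair : forall a b c (f : Hom a c) (g : Hom b c) z (u : Hom z a) (v : Hom z b),
      f ∘ u = g ∘ v -> Hom z (pb f g);
  pb_pair1 : forall a b c (f : Hom a c) (g : Hom b c) z (u : Hom z a) (v : Hom z b)
      (H : f ∘ u = g ∘ v), pb1 f g ∘ pb_pair H = u;
  pb_pair2 : forall a b c (f : Hom a c) (g : Hom b c) z (u : Hom z a) (v : Hom z b)
      (H : f ∘ u = g ∘ v), pb2 f g ∘ pb_pair H = v;
  pb_uniq : forall a b c (f : Hom a c) (g : Hom b c) z (h k : Hom z (pb f g)),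
      pb1 f g ∘ h = pb1 f g ∘ k -> pb2 f g ∘ h = pb2 f g ∘ k -> h = k }.
Arguments term {C} _.
Arguments prod {C} _ _ _.
Arguments pr1 {C} _ {a b}.
Arguments pr2 {C} _ {a b}.
Arguments pair {C} _ {z a b} _ _.
Arguments pb {C} _ {a b c} _ _.
Arguments pb1 {C} _ {a b c} _ _.
Arguments pb2 {C} _ {a b c} _ _.

Record FactSys (C : Cat) : Type := {
  inE : forall a b : C, Hom a b -> Prop;
  inM : forall a b : C, Hom a b -> Prop;
  iso_E : forall a b (f : Hom a b), is_iso f -> inE f;
  iso_M : forall a b (f : Hom a b), is_iso f -> inM f;
  comp_E : forall a b c (f : Hom a b) (g : Hom b c), inE f -> inE g -> inE (g ∘ f);
  comp_M : forall a b c (f : Hom a b) (g : Hom b c), inM f -> inM g -> inM (g ∘ f);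
  fac_ob : forall a b : C, Hom a b -> C;
  fac_e : forall a b (f : Hom a b), Hom a (fac_ob f);
  fac_m : forall a b (f : Hom a b), Hom (fac_ob f) b;
  fac_eE : forall a b (f : Hom a b), inE (fac_e f);
  fac_mM : forall a b (f : Hom a b), inM (fac_m f);
  fac_comp : forall a b (f : Hom a b), fac_m f ∘ fac_e f = f;
  diagonal : forall a b c d (e : Hom a b) (m : Hom c d) (u : Hom a c) (v : Hom b d),
      inE e -> inM m -> m ∘ u = v ∘ e ->
      exists w : Hom b c, w ∘ e = u /\ m ∘ w = v /\
        forall w' : Hom b c, w' ∘ e = u -> m ∘ w' = v -> w' = w;
  E_epi : forall a b (e : Hom a b), inE e ->
      forall c (g h : Hom b c), g ∘ e = h ∘ e -> g = h;
  M_mono : forall a b (m : Hom a b), inM m ->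
      forall c (g h : Hom c a), m ∘ g = m ∘ h -> g = h }.
Arguments inE {C} _ {a b} _.
Arguments inM {C} _ {a b} _.
Arguments fac_ob {C} _ {a b} _.
Arguments fac_e {C} _ {a b} _.
Arguments fac_m {C} _ {a b} _.

(* A (candidate) subobject of a: any morphism with codomain a; sub a = M/a
   is the subclass of those with isM. *)
Definition sub (C : Cat) (a : C) : Type := { m : C & Hom m a }.
Definition isM (C : Cat) (F : FactSys C) (a : C) (s : sub a) : Prop := inM F (projT2 s).
Definition sle (C : Cat) (a : C) (s t : sub a) : Prop :=
  exists j : Hom (projT1 s) (projT1 t), projT2 s = projT2 t ∘ j.
Definition seqv (C : Cat) (a : C) (s t : sub a) : Prop := sle s t /\ sle t s.

Definition img (C : Cat) (F : FactSys C) (a b : C) (f : Hom a b) (s : sub a) : sub b :=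
  existT _ (fac_ob F (f ∘ projT2 s)) (fac_m F (f ∘ projT2 s)).
(* g(1_M): M-part of the factorization of g *)
Definition npart (C : Cat) (F : FactSys C) (a b : C) (g : Hom a b) : sub b :=
  existT _ (fac_ob F g) (fac_m F g).
Definition preimg (C : Cat) (L : FinLim C) (a b : C) (f : Hom a b) (n : sub b) : sub a :=
  existT _ (pb L f (projT2 n)) (pb1 L f (projT2 n)).

Record ClosureOp (C : Cat) (F : FactSys C) : Type := {
  cl : forall a : C, sub a -> sub a;
  cl_M : forall a (s : sub a), isM F s -> isM F (cl s);
  cl_ext : forall a (s : sub a), isM F s -> sle s (cl s);
  cl_mono : forall a (s t : sub a), isM F s -> isM F t -> sle s t -> sle (cl s) (cl t);
  cl_cont : forall a b (f : Hom a b) (s : sub a), isM F s ->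
      sle (img F f (cl s)) (cl (img F f s)) }.
Arguments ClosureOp : clear implicits.
Arguments cl {C F} _ {a} _.

(* c(g) := c(g(1_M)) for an arbitrary morphism g *)
Definition clm (C : Cat) (F : FactSys C) (c : forall a : C, sub a -> sub a)
  (a b : C) (g : Hom a b) : sub b := c b (npart F g).

Definition diagm (C : Cat) (L : FinLim C) (a : C) : Hom a (prod L a a) :=
  pair L (cid a) (cid a).

Definition separated (C : Cat) (L : FinLim C) (F : FactSys C)
  (d : forall a : C, sub a -> sub a) (a : C) : Prop :=
  seqv (clm F d (diagm L a)) (existT _ a (diagm L a) : sub (prod L a a)).

Definition compact (C : Cat) (L : FinLim C) (F : FactSys C)
  (d : forall a : C, sub a -> sub a) (x : C) : Prop :=
  forall (y : C) (m : sub (prod L x y)), isM F m ->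
    seqv (img F (pr2 L) (d _ m)) (d _ (img F (pr2 L) m)).

Record Setting : Type := {
  CX : Cat; LX : FinLim CX; FX : FactSys CX;
  CA : Cat; LA : FinLim CA; FA : FactSys CA;
  Iob : CA -> CX;
  Ihom : forall a b : CA, Hom a b -> Hom (Iob a) (Iob b);
  I_id : forall a : CA, Ihom (cid a) = cid (Iob a);
  I_comp : forall (a b c : CA) (f : Hom a b) (g : Hom b c), Ihom (g ∘ f) = Ihom g ∘ Ihom f;
  I_full : forall (a b : CA) (f : Hom (Iob a) (Iob b)), exists g, Ihom g = f;
  I_faithful : forall (a b : CA) (f g : Hom a b), Ihom f = Ihom g -> f = g;
  I_injective : forall a b : CA, Iob a = Iob b -> a = b;
  Rob : CX -> CA;
  Rhom : forall x y : CX, Hom x y -> Hom (Rob x) (Rob y);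
  R_id : forall x : CX, Rhom (cid x) = cid (Rob x);
  R_comp : forall (x y z : CX) (f : Hom x y) (g : Hom y z), Rhom (g ∘ f) = Rhom g ∘ Rhom f;
  rho : forall x : CX, Hom x (Iob (Rob x));
  rho_nat : forall (x y : CX) (f : Hom x y), Ihom (Rhom f) ∘ rho x = rho y ∘ f;
  rho_univ : forall (x : CX) (a : CA) (f : Hom x (Iob a)),
      exists g : Hom (Rob x) a, Ihom g ∘ rho x = f /\
        forall g' : Hom (Rob x) a, Ihom g' ∘ rho x = f -> g' = g;
  N_sub_M : forall (a b : CA) (f : Hom a b), inM FA f -> inM FX (Ihom f);
  RE_sub_F : forall (x y : CX) (f : Hom x y), inE FX f -> inE FA (Rhom f) }.

Arguments Iob {s} _.
Arguments Ihom {s a b} _.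
Arguments Rob {s} _.
Arguments Rhom {s x y} _.
Arguments rho {s} _.

Definition Isub (S : Setting) (a : CA S) (n : sub a) : sub (Iob a) :=
  existT _ (Iob (projT1 n)) (Ihom (projT2 n)).

(* the R-initial lift c^rho:  c^rho_X(m) = rho_X^{-1}(c_{RX}(Rm)) *)
Definition lift (S : Setting) (c : ClosureOp (CA S) (FA S)) (x : CX S) (m : sub x) : sub x :=
  preimg (LX S) (rho x) (Isub (clm (FA S) (@cl _ _ c) (Rhom (projT2 m)))).

Definition E_pullback_stable (S : Setting) : Prop :=
  forall (a b c : CX S) (f : Hom a c) (e : Hom b c), inE (FX S) e -> inE (FX S) (pb1 (LX S) f e).

Definition F_sub_E (S : Setting) : Prop :=
  forall (a b : CA S) (f : Hom a b), inE (FA S) f -> inE (FX S) (Ihom f).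

Definition R_preserves_products_with (S : Setting) (x : CX S) : Prop :=
  forall y : CX S,
    is_iso (pair (LA S) (Rhom (pr1 (LX S) (a:=x) (b:=y))) (Rhom (pr2 (LX S) (a:=x) (b:=y)))).

(* If [X] is [c^rho]-compact, the graph of [rho_X] is [c^rho]-closed because [RX]
   is [c]-separated, while the closure of its projection (the image of [rho_X]) is
   all of [RX]; compactness then splits the M-part of [rho_X], so [rho_X] is in E.  Pulling a subobject of [RX * B] back along
   [rho_X * 1] to [X * B], and using that pullbacks of [rho_X] are E-covers, moves
   compactness from [X] down to [RX].  Conversely, if [rho_X] is in E and
   [R(X * Y) = RX * RY], a point of [c^rho(pr2(m))] lifts along pullbacks of E-maps
   to a point of [c^rho(m)], the required point of [RX * RY] being provided by the
   compactness of [RX]. *)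

Set Implicit Arguments.
Unset Strict Implicit.

Section FactorizationSystem.
Variables (C : Cat) (F : FactSys C).

Lemma sle_trans (a : C) (s t u : sub a) : sle s t -> sle t u -> sle s u.
Proof.
  intros [j Hj] [k Hk]. exists (k ∘ j). rewrite Hj, Hk. symmetry. apply comp_assoc.
Qed.

Lemma factor_M_of_E (a b c d : C) (e : Hom a b) (m : Hom c d) (h : Hom b d) (u : Hom a c) :
  inE F e -> inM F m -> h ∘ e = m ∘ u -> exists w, h = m ∘ w.
Proof.
  intros He Hm H. destruct (diagonal He Hm (eq_sym H)) as [w [_ [Hw _]]].
  exists w. symmetry. exact Hw.
Qed.

Lemma npart_M (a b : C) (f : Hom a b) : isM F (npart F f).
Proof. apply fac_mM. Qed.

Lemma img_M (a b : C) (f : Hom a b) (s : sub a) : isM F (img F f s).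
Proof. apply fac_mM. Qed.

Lemma factor_of_npart_sle (a b : C) (f : Hom a b) (t : sub b) :
  sle (npart F f) t -> exists j, f = projT2 t ∘ j.
Proof.
  intros [j Hj]. exists (j ∘ fac_e F f).
  rewrite comp_assoc, <- Hj. symmetry. apply fac_comp.
Qed.

Lemma npart_sle (a b : C) (f : Hom a b) (t : sub b) :
  isM F t -> (exists j, f = projT2 t ∘ j) -> sle (npart F f) t.
Proof.
  intros Ht [j Hj]. apply (factor_M_of_E (fac_eE F f) Ht (u := j)).
  rewrite fac_comp. exact Hj.
Qed.

Lemma img_npart_sle (a b c : C) (g : Hom a b) (f : Hom b c) (t : sub c) :
  isM F t -> (exists j, f ∘ g = projT2 t ∘ j) -> sle (img F f (npart F g)) t.
Proof.
  intros Ht [j Hj]. apply (npart_sle Ht).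
  apply (factor_M_of_E (fac_eE F g) Ht (u := j)).
  rewrite <- comp_assoc. simpl. rewrite fac_comp. exact Hj.
Qed.

Lemma inE_of_split (a b : C) (f : Hom a b) (s : Hom b (fac_ob F f)) :
  fac_m F f ∘ s = cid b -> inE F f.
Proof.
  intros Hs. rewrite <- (fac_comp F f). apply comp_E; [apply fac_eE|].
  apply iso_E. exists s. split; [|exact Hs].
  apply (M_mono (fac_mM F f)). rewrite comp_assoc, Hs, comp_idl, comp_idr. reflexivity.
Qed.

Lemma iso_pair_jointly_monic (L : FinLim C) (a b1 b2 : C) (h1 : Hom a b1) (h2 : Hom a b2) :
  is_iso (pair L h1 h2) ->
  forall z (p q : Hom z a), h1 ∘ p = h1 ∘ q -> h2 ∘ p = h2 ∘ q -> p = q.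
Proof.
  intros [k [Hk _]] z p q H1 H2.
  assert (Hpq : pair L h1 h2 ∘ p = pair L h1 h2 ∘ q).
  { apply (pair_uniq (f0 := L)); rewrite !comp_assoc, ?pair_pr1, ?pair_pr2; assumption. }
  rewrite <- (comp_idl p), <- (comp_idl q), <- Hk, <- !comp_assoc, Hpq. reflexivity.
Qed.

Section Pullbacks.
Variable L : FinLim C.

(* The pullback of an M-map is an M-map: factor [pb1], lift its E-part by the
   diagonal property, and the universal property makes that E-part invertible. *)
Lemma inM_pb (a b c : C) (f : Hom a c) (m : Hom b c) : inM F m -> inM F (pb1 L f m).
Proof.
  intros Hm. set (p := pb1 L f m).
  assert (Hsq : m ∘ pb2 L f m = (f ∘ fac_m F p) ∘ fac_e F p).
  { rewrite <- comp_assoc, fac_comp. symmetry. apply pb_comm. }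
  destruct (diagonal (fac_eE F p) Hm Hsq) as [w [Hw1 [Hw2 _]]].
  set (k := pb_pair L (eq_sym Hw2)).
  assert (Hke : k ∘ fac_e F p = cid _).
  { apply (pb_uniq (f0 := L)).
    - rewrite comp_idr, comp_assoc. unfold k. rewrite pb_pair1. apply fac_comp.
    - rewrite comp_idr, comp_assoc. unfold k. rewrite pb_pair2. exact Hw1. }
  assert (Hek : fac_e F p ∘ k = cid _).
  { apply (E_epi (fac_eE F p)). rewrite <- comp_assoc, Hke, comp_idr, comp_idl. reflexivity. }
  rewrite <- (fac_comp F p). apply comp_M; [|apply fac_mM].
  apply iso_M. exists k. split; assumption.
Qed.

Lemma pb_E_cover (HEpb : forall a b c (f : Hom a c) (e : Hom b c), inE F e -> inE F (pb1 L f e))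
  (a b c : C) (e : Hom b c) (f : Hom a c) :
  inE F e -> exists (p : C) (e' : Hom p a) (g : Hom p b), inE F e' /\ f ∘ e' = e ∘ g.
Proof.
  intros He. exists (pb L f e), (pb1 L f e), (pb2 L f e).
  split; [exact (HEpb _ _ _ f e He) | apply pb_comm].
Qed.

Definition graph (a b : C) (f : Hom a b) : sub (prod L a b) := npart F (pair L (cid a) f).

End Pullbacks.
End FactorizationSystem.

Section ClosureOperator.
Variables (C : Cat) (L : FinLim C) (F : FactSys C) (d : ClosureOp C F).

Lemma cl_img_iso (a b : C) (f : Hom a b) (s : sub a) : is_iso f -> isM F s ->
  exists j, projT2 (cl d (img F f s)) = f ∘ (projT2 (cl d s) ∘ j).
Proof.
  intros [g [Hgf Hfg]] Hs.
  assert (Hback : sle (img F g (img F f s)) s).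
  { apply (img_npart_sle Hs). exists (cid _).
    rewrite comp_idr, comp_assoc, Hgf, comp_idl. reflexivity. }
  assert (Hcl : sle (img F g (cl d (img F f s))) (cl d s)).
  { eapply sle_trans; [apply cl_cont, img_M|].
    apply cl_mono; [apply img_M | exact Hs | exact Hback]. }
  destruct (factor_of_npart_sle Hcl) as [j Hj]. simpl in Hj.
  exists j. rewrite <- Hj, comp_assoc, Hfg, comp_idl. reflexivity.
Qed.

(* Pair [p] and [q] into [r * r]: the image of [s] lies in the diagonal, hence
   so does the image of its closure, because the diagonal is closed. *)
Lemma separated_cl_eq (r : C) (Hr : separated L F (@cl _ _ d) r)
  (a : C) (p q : Hom a r) (s : sub a) :
  isM F s -> p ∘ projT2 s = q ∘ projT2 s -> p ∘ projT2 (cl d s) = q ∘ projT2 (cl d s).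
Proof.
  intros Hs Hpq.
  set (h := pair L p q).
  assert (Hdiag : sle (img F h s) (npart F (diagm L r))).
  { apply (npart_sle (npart_M F _)). exists (fac_e F (diagm L r) ∘ (p ∘ projT2 s)).
    simpl. rewrite comp_assoc, fac_comp. unfold h, diagm.
    apply (pair_uniq (f0 := L)); rewrite !comp_assoc.
    - rewrite !pair_pr1, comp_idl. reflexivity.
    - rewrite !pair_pr2, comp_idl. symmetry. exact Hpq. }
  assert (Hcl : sle (img F h (cl d s)) (existT _ r (diagm L r))).
  { eapply sle_trans; [apply cl_cont, Hs|].
    eapply sle_trans; [|exact (proj1 Hr)].
    apply cl_mono; [apply img_M | apply npart_M | exact Hdiag]. }
  destruct (factor_of_npart_sle Hcl) as [j Hj]. simpl in Hj.
  transitivity j.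
  - rewrite <- (pair_pr1 L p q), <- comp_assoc. fold h. rewrite Hj, comp_assoc.
    unfold diagm. rewrite pair_pr1. apply comp_idl.
  - rewrite <- (pair_pr2 L p q), <- comp_assoc. fold h. rewrite Hj, comp_assoc.
    unfold diagm. rewrite pair_pr2. symmetry. apply comp_idl.
Qed.

End ClosureOperator.

Section Reflection.
Variable S : Setting.

Lemma rho_ext (x : CX S) (a : CA S) (g g' : Hom (Rob x) a) :
  Ihom g ∘ rho x = Ihom g' ∘ rho x -> g = g'.
Proof.
  intros H. destruct (rho_univ (Ihom g ∘ rho x)) as [g0 [_ Hg0]].
  rewrite (Hg0 g eq_refl), (Hg0 g' (eq_sym H)). reflexivity.
Qed.

Lemma rho_factor (z : CX S) (a : CA S) (u : Hom z (Iob a)) : exists u', u = Ihom u' ∘ rho z.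
Proof. destruct (rho_univ u) as [u' [Hu _]]. exists u'. symmetry. exact Hu. Qed.

Lemma I_jointly_monic (a b1 b2 : CA S) (h1 : Hom a b1) (h2 : Hom a b2) :
  (forall c (p q : Hom c a), h1 ∘ p = h1 ∘ q -> h2 ∘ p = h2 ∘ q -> p = q) ->
  forall z (u v : Hom z (Iob a)),
    Ihom h1 ∘ u = Ihom h1 ∘ v -> Ihom h2 ∘ u = Ihom h2 ∘ v -> u = v.
Proof.
  intros J z u v H1 H2.
  destruct (rho_factor u) as [u' ->]. destruct (rho_factor v) as [v' ->].
  rewrite !comp_assoc, <- !I_comp in H1, H2.
  rewrite (J _ u' v'); auto using rho_ext.
Qed.

Lemma Rrho_iso (x : CX S) : is_iso (Rhom (rho x)).
Proof.
  destruct (rho_univ (cid (Iob (Rob x)))) as [eps [He _]].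
  destruct (I_full (rho (Iob (Rob x)))) as [g Hg].
  assert (Hgr : Rhom (rho x) = g).
  { apply rho_ext. rewrite rho_nat, Hg. reflexivity. }
  exists eps. split; apply rho_ext.
  - rewrite I_comp, <- comp_assoc, rho_nat, comp_assoc, He, comp_idl, I_id, comp_idl.
    reflexivity.
  - rewrite I_comp, <- comp_assoc, He, comp_idr, I_id, comp_idl, Hgr, Hg. reflexivity.
Qed.

Lemma Isub_M (a : CA S) (n : sub a) : isM (FA S) n -> isM (FX S) (Isub n).
Proof. apply N_sub_M. Qed.

Lemma Isub_sle (a : CA S) (s t : sub a) : sle (Isub s) (Isub t) -> sle s t.
Proof.
  intros [j Hj]. destruct (I_full j) as [j' Hj']. exists j'.
  apply I_faithful. rewrite I_comp, Hj'. exact Hj.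
Qed.

Lemma rho_times_id (x : CX S) (b : CA S) :
  exists psi : Hom (prod (LX S) x (Iob b)) (Iob (prod (LA S) (Rob x) b)),
    Ihom (pr1 (LA S)) ∘ psi = rho x ∘ pr1 (LX S) /\ Ihom (pr2 (LA S)) ∘ psi = pr2 (LX S).
Proof.
  destruct (rho_factor (pr2 (LX S) (a:=x) (b:=Iob b))) as [g2 Hg2].
  exists (Ihom (pair (LA S) (Rhom (pr1 (LX S))) g2) ∘ rho _).
  split; rewrite comp_assoc, <- I_comp.
  - rewrite pair_pr1. apply rho_nat.
  - rewrite pair_pr2. symmetry. exact Hg2.
Qed.

(* The pullback of [rho x] along the first component of [n] is an E-cover of [n]
   whose points lie in the preimage of [n]. *)
Lemma img_preimg_cover (HEpb : E_pullback_stable S) (x : CX S) (b : CA S)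
  (psi : Hom (prod (LX S) x (Iob b)) (Iob (prod (LA S) (Rob x) b)))
  (Hpsi1 : Ihom (pr1 (LA S)) ∘ psi = rho x ∘ pr1 (LX S))
  (Hpsi2 : Ihom (pr2 (LA S)) ∘ psi = pr2 (LX S))
  (HE : inE (FX S) (rho x)) (n : sub (prod (LA S) (Rob x) b)) :
  exists j, Ihom (pr2 (LA S) ∘ projT2 n)
            = projT2 (img (FX S) (pr2 (LX S)) (preimg (LX S) psi (Isub n))) ∘ j.
Proof.
  destruct (pb_E_cover HEpb (Ihom (pr1 (LA S) ∘ projT2 n)) HE) as [P [e [u [He Hu]]]].
  set (pq := pair (LX S) u (Ihom (pr2 (LA S) ∘ projT2 n) ∘ e)).
  assert (Hpq : psi ∘ pq = Ihom (projT2 n) ∘ e).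
  { apply (I_jointly_monic (h1 := pr1 (LA S)) (h2 := pr2 (LA S))).
    - intros; apply (pair_uniq (f0 := LA S)); assumption.
    - rewrite !comp_assoc, Hpsi1, <- comp_assoc. unfold pq.
      rewrite pair_pr1, <- I_comp. symmetry. exact Hu.
    - rewrite !comp_assoc, Hpsi2. unfold pq. rewrite pair_pr2, <- I_comp. reflexivity. }
  apply (factor_M_of_E He (fac_mM _ _)
           (u := fac_e (FX S) (pr2 (LX S) ∘ pb1 (LX S) psi (Ihom (projT2 n)))
                 ∘ pb_pair (LX S) Hpq)).
  simpl. rewrite comp_assoc, fac_comp, <- comp_assoc, pb_pair1.
  unfold pq. rewrite pair_pr2. reflexivity.
Qed.

End Reflection.

Section Lift.
Variables (S : Setting) (c : ClosureOp (CA S) (FA S)).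

Local Notation Rcl m := (cl c (npart (FA S) (Rhom (projT2 m)))).
Local Notation Rcmp x y :=
  (pair (LA S) (Rhom (pr1 (LX S) (a:=x) (b:=y))) (Rhom (pr2 (LX S) (a:=x) (b:=y)))).

Lemma lift_M (x : CX S) (m : sub x) : isM (FX S) (lift c m).
Proof. apply inM_pb, N_sub_M, cl_M, npart_M. Qed.

Lemma lift_intro (x z : CX S) (m : sub x) (u : Hom z x) (v : Hom z (Iob (projT1 (Rcl m)))) :
  rho x ∘ u = Ihom (projT2 (Rcl m)) ∘ v -> exists j, u = projT2 (lift c m) ∘ j.
Proof. intros H. exists (pb_pair (LX S) H). symmetry. exact (pb_pair1 (LX S) H). Qed.

Lemma rho_lift (x : CX S) (m : sub x) :
  exists v, rho x ∘ projT2 (lift c m) = Ihom (projT2 (Rcl m)) ∘ v.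
Proof. eexists. apply pb_comm. Qed.

Lemma lift_cont (y z : CX S) (f : Hom z y) (m : sub z) :
  sle (img (FX S) f (lift c m)) (lift c (img (FX S) f m)).
Proof.
  assert (Himg : sle (img (FA S) (Rhom f) (npart (FA S) (Rhom (projT2 m))))
                     (npart (FA S) (Rhom (projT2 (img (FX S) f m))))).
  { apply (img_npart_sle (npart_M _ _)).
    exists (fac_e (FA S) (Rhom (fac_m (FX S) (f ∘ projT2 m)))
            ∘ Rhom (fac_e (FX S) (f ∘ projT2 m))).
    simpl. rewrite comp_assoc, fac_comp, <- !R_comp, fac_comp. reflexivity. }
  assert (Hcl : sle (img (FA S) (Rhom f) (Rcl m)) (Rcl (img (FX S) f m))).
  { eapply sle_trans; [apply cl_cont, npart_M|].
    apply cl_mono; [apply img_M | apply npart_M | exact Himg]. }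
  destruct (factor_of_npart_sle Hcl) as [w Hw].
  destruct (rho_lift m) as [v Hv].
  apply (npart_sle (lift_M _)).
  apply (lift_intro (m := img (FX S) f m) (v := Ihom w ∘ v)).
  rewrite comp_assoc, <- rho_nat, <- comp_assoc.
  (* [rewrite Hv] fails: [Hv] mentions the universe-polymorphic [lift] at another
     universe instance, which [exact] unifies but [rewrite] does not match. *)
  transitivity (Ihom (Rhom f) ∘ (Ihom (projT2 (Rcl m)) ∘ v)); [f_equal; exact Hv|].
  rewrite !comp_assoc, <- !I_comp, Hw. reflexivity.
Qed.

Lemma cl_le_lift (a b : CA S) (h : Hom b a) (t : sub (Iob a)) :
  (exists j, Ihom h = projT2 t ∘ j) -> sle (Isub (clm (FA S) (@cl _ _ c) h)) (lift c t).
Proof.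
  intros [j Hj].
  destruct (I_full (rho (Iob a))) as [g Hg].
  destruct (I_full (rho (projT1 t) ∘ j)) as [k Hk].
  assert (Hgh : g ∘ h = Rhom (projT2 t) ∘ k).
  { apply I_faithful. rewrite !I_comp, Hg, Hk, Hj, !comp_assoc, rho_nat. reflexivity. }
  assert (Hcl : sle (img (FA S) g (cl c (npart (FA S) h))) (Rcl t)).
  { eapply sle_trans; [apply cl_cont, npart_M|].
    apply cl_mono; [apply img_M | apply npart_M|].
    apply (img_npart_sle (npart_M _ _)). exists (fac_e (FA S) (Rhom (projT2 t)) ∘ k).
    simpl. rewrite comp_assoc, fac_comp. exact Hgh. }
  destruct (factor_of_npart_sle Hcl) as [w Hw].
  apply (lift_intro (v := Ihom w)).
  simpl. rewrite <- Hg, <- !I_comp. f_equal. exact Hw.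
Qed.

Lemma lift_preimg (z : CX S) (a : CA S) (psi : Hom z (Iob a)) (n : sub a) :
  isM (FA S) n ->
  exists v, psi ∘ projT2 (lift c (preimg (LX S) psi (Isub n))) = Ihom (projT2 (cl c n)) ∘ v.
Proof.
  intros Hn. set (m := preimg (LX S) psi (Isub n)).
  destruct (rho_factor psi) as [G HG].
  destruct (rho_factor (pb2 (LX S) psi (Ihom (projT2 n)))) as [p Hp].
  assert (HGm : G ∘ Rhom (projT2 m) = projT2 n ∘ p).
  { apply rho_ext. unfold m. simpl.
    rewrite !I_comp, <- !comp_assoc, rho_nat, comp_assoc, <- HG, <- Hp.
    apply pb_comm. }
  assert (Hcl : sle (img (FA S) G (Rcl m)) (cl c n)).
  { eapply sle_trans; [apply cl_cont, npart_M|].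
    apply cl_mono; [apply img_M | exact Hn|].
    apply (img_npart_sle Hn). exists p. exact HGm. }
  destruct (factor_of_npart_sle Hcl) as [w Hw].
  destruct (rho_lift m) as [v Hv].
  exists (Ihom w ∘ v).
  transitivity ((Ihom G ∘ rho z) ∘ projT2 (lift c m)); [f_equal; exact HG|].
  rewrite <- comp_assoc.
  transitivity (Ihom G ∘ (Ihom (projT2 (Rcl m)) ∘ v)); [f_equal; exact Hv|].
  rewrite !comp_assoc, <- !I_comp, Hw. reflexivity.
Qed.

Lemma lift_total (y : CX S) (t : sub y) (s : Hom (Rob y) (Rob (projT1 t))) :
  Rhom (projT2 t) ∘ s = cid (Rob y) -> exists j, cid y = projT2 (lift c t) ∘ j.
Proof.
  intros Hs. destruct (cl_ext c (npart_M (FA S) (Rhom (projT2 t)))) as [j Hj].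
  apply (lift_intro (v := Ihom (j ∘ (fac_e (FA S) (Rhom (projT2 t)) ∘ s)) ∘ rho y)).
  rewrite comp_idr, comp_assoc, <- I_comp, !comp_assoc.
  transitivity
    (Ihom (fac_m (FA S) (Rhom (projT2 t)) ∘ fac_e (FA S) (Rhom (projT2 t)) ∘ s) ∘ rho y).
  - rewrite fac_comp, Hs, I_id, comp_idl. reflexivity.
  - do 4 f_equal. exact Hj.
Qed.

(* With [f^#] the transpose of [f] and [q] that of the second projection, the
   maps [f^# ∘ R pr1] and [q] agree on [R(graph f)]; separation of [a] makes
   them agree on its closure, which is what the equation says after applying [I]. *)
Lemma lift_graph (x : CX S) (a : CA S) (f : Hom x (Iob a)) :
  separated (LA S) (FA S) (@cl _ _ c) a ->
  pr2 (LX S) ∘ projT2 (lift c (graph (FX S) (LX S) f))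
  = f ∘ (pr1 (LX S) ∘ projT2 (lift c (graph (FX S) (LX S) f))).
Proof.
  intros Ha.
  set (g := pair (LX S) (cid x) f).
  destruct (rho_factor f) as [fs Hfs].
  destruct (rho_factor (pr2 (LX S) (a:=x) (b:=Iob a))) as [q Hq].
  set (p := fs ∘ Rhom (pr1 (LX S) (a:=x) (b:=Iob a))).
  assert (Hp : p ∘ Rhom g = fs).
  { unfold p. rewrite <- comp_assoc, <- R_comp. unfold g. rewrite pair_pr1, R_id.
    apply comp_idr. }
  assert (Hq' : q ∘ Rhom g = fs).
  { apply rho_ext. rewrite I_comp, <- comp_assoc, rho_nat, comp_assoc, <- Hq, <- Hfs.
    unfold g. apply pair_pr2. }
  assert (HRg : fac_m (FA S) (Rhom (fac_m (FX S) g))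
                ∘ (fac_e (FA S) (Rhom (fac_m (FX S) g)) ∘ Rhom (fac_e (FX S) g)) = Rhom g).
  { rewrite comp_assoc, fac_comp, <- R_comp, fac_comp. reflexivity. }
  assert (Hfm : p ∘ fac_m (FA S) (Rhom (fac_m (FX S) g))
                = q ∘ fac_m (FA S) (Rhom (fac_m (FX S) g))).
  { apply (E_epi (comp_E (RE_sub_F (fac_eE (FX S) g)) (fac_eE (FA S) (Rhom (fac_m (FX S) g))))).
    rewrite <- !comp_assoc, HRg, Hp, Hq'. reflexivity. }
  pose proof (separated_cl_eq Ha (npart_M _ _) Hfm) as Hcl.
  destruct (rho_lift (graph (FX S) (LX S) f)) as [v Hv].
  set (l := projT2 (lift c (graph (FX S) (LX S) f))) in *.
  set (K := projT2 (Rcl (graph (FX S) (LX S) f))) in *.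
  change (p ∘ K = q ∘ K) in Hcl.
  transitivity (Ihom (q ∘ K) ∘ v).
  - rewrite Hq, <- comp_assoc, I_comp, <- comp_assoc. f_equal. exact Hv.
  - change (Ihom (q ∘ K) ∘ v = f ∘ (pr1 (LX S) ∘ l)).
    assert (Hf : f ∘ (pr1 (LX S) ∘ l) = Ihom fs ∘ (rho x ∘ (pr1 (LX S) ∘ l))).
    { rewrite !comp_assoc, <- Hfs. reflexivity. }
    rewrite <- Hcl, Hf. unfold p.
    rewrite (comp_assoc l (pr1 (LX S)) (rho x)), <- rho_nat, <- comp_assoc.
    transitivity (Ihom fs ∘ (Ihom (Rhom (pr1 (LX S))) ∘ (Ihom K ∘ v))).
    + rewrite !I_comp, !comp_assoc. reflexivity.
    + rewrite <- comp_assoc. do 2 f_equal. symmetry. exact Hv.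
Qed.

Lemma R_img_pr2 (x y : CX S) (m : sub (prod (LX S) x y)) :
  sle (npart (FA S) (Rhom (projT2 (img (FX S) (pr2 (LX S)) m))))
      (img (FA S) (pr2 (LA S)) (img (FA S) (Rcmp x y) (npart (FA S) (Rhom (projT2 m))))).
Proof.
  apply (npart_sle (img_M _ _ _)).
  apply (factor_M_of_E (RE_sub_F (fac_eE (FX S) (pr2 (LX S) ∘ projT2 m))) (fac_mM _ _)
    (u := fac_e (FA S) (pr2 (LA S) ∘ fac_m (FA S) (Rcmp x y ∘ fac_m (FA S) (Rhom (projT2 m))))
          ∘ (fac_e (FA S) (Rcmp x y ∘ fac_m (FA S) (Rhom (projT2 m)))
             ∘ fac_e (FA S) (Rhom (projT2 m))))).
  simpl. rewrite <- R_comp, fac_comp, R_comp.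
  rewrite comp_assoc, fac_comp, <- comp_assoc, (comp_assoc _ (fac_e _ _)), fac_comp.
  rewrite <- !comp_assoc, fac_comp, comp_assoc, pair_pr2. reflexivity.
Qed.

Lemma lift_intro_prod (x y : CX S) (Hiso : is_iso (Rcmp x y)) (m : sub (prod (LX S) x y))
  (k : sub (prod (LA S) (Rob x) (Rob y)))
  (Hk : exists j, projT2 k = Rcmp x y ∘ (projT2 (Rcl m) ∘ j))
  (z : CX S) (u : Hom z (prod (LX S) x y)) (w : Hom z (Iob (projT1 k))) :
  rho x ∘ (pr1 (LX S) ∘ u) = Ihom (pr1 (LA S) ∘ projT2 k) ∘ w ->
  rho y ∘ (pr2 (LX S) ∘ u) = Ihom (pr2 (LA S) ∘ projT2 k) ∘ w ->
  exists j, u = projT2 (lift c m) ∘ j.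
Proof.
  intros H1 H2. destruct Hk as [j0 Hj0].
  apply (lift_intro (v := Ihom j0 ∘ w)).
  apply (I_jointly_monic (iso_pair_jointly_monic Hiso));
    rewrite !comp_assoc, rho_nat, <- comp_assoc, <- !I_comp.
  - rewrite H1, Hj0, !comp_assoc, pair_pr1. reflexivity.
  - rewrite H2, Hj0, !comp_assoc, pair_pr2. reflexivity.
Qed.

Lemma rho_E_of_lift_compact (x : CX S) :
  separated (LA S) (FA S) (@cl _ _ c) (Rob x) ->
  compact (LX S) (FX S) (lift c) x -> inE (FX S) (rho x).
Proof.
  intros Hsep Hx.
  set (g := pair (LX S) (cid x) (rho x)).
  set (m := graph (FX S) (LX S) (rho x)).
  set (e := fac_e (FX S) (pr2 (LX S) ∘ fac_m (FX S) g) ∘ fac_e (FX S) g).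
  assert (He : projT2 (img (FX S) (pr2 (LX S)) m) ∘ e = rho x).
  { unfold e. simpl. rewrite comp_assoc, fac_comp, <- comp_assoc, fac_comp. apply pair_pr2. }
  destruct (Rrho_iso x) as [r [_ Hr]].
  destruct (lift_total (t := img (FX S) (pr2 (LX S)) m) (s := Rhom e ∘ r)) as [j0 Hj0].
  { rewrite comp_assoc, <- R_comp, <- Hr. do 2 f_equal. exact He. }
  destruct (Hx _ m (npart_M _ _)) as [_ Hcomp].
  assert (Hgraph : sle (img (FX S) (pr2 (LX S)) (lift c m)) (npart (FX S) (rho x))).
  { apply (npart_sle (npart_M _ _)).
    exists (fac_e (FX S) (rho x) ∘ (pr1 (LX S) ∘ projT2 (lift c m))).
    simpl. rewrite comp_assoc, fac_comp. apply lift_graph. exact Hsep. }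
  destruct (sle_trans Hcomp Hgraph) as [j1 Hj1]. simpl in Hj1.
  apply (inE_of_split (s := j1 ∘ j0)). rewrite comp_assoc.
  transitivity (projT2 (lift c (img (FX S) (pr2 (LX S)) m)) ∘ j0).
  - f_equal. symmetry. exact Hj1.
  - symmetry. exact Hj0.
Qed.

Lemma R_compact_of_lift_compact (HEpb : E_pullback_stable S) (x : CX S) :
  inE (FX S) (rho x) -> compact (LX S) (FX S) (lift c) x ->
  compact (LA S) (FA S) (@cl _ _ c) (Rob x).
Proof.
  intros HE Hx b n Hn. split; [apply cl_cont, Hn|].
  destruct (rho_times_id x b) as [psi [Hpsi1 Hpsi2]].
  set (m := preimg (LX S) psi (Isub n)).
  assert (Hm : isM (FX S) m) by (apply inM_pb, Isub_M, Hn).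
  destruct (Hx (Iob b) m Hm) as [_ Hcomp].
  assert (Hn2 : sle (Isub (cl c (img (FA S) (pr2 (LA S)) n)))
                    (lift c (img (FX S) (pr2 (LX S)) m)))
    by exact (cl_le_lift (img_preimg_cover HEpb Hpsi1 Hpsi2 HE n)).
  assert (Hm2 : sle (img (FX S) (pr2 (LX S)) (lift c m))
                    (Isub (img (FA S) (pr2 (LA S)) (cl c n)))).
  { destruct (lift_preimg psi Hn) as [v Hv].
    apply (npart_sle (Isub_M (npart_M _ _))).
    exists (Ihom (fac_e (FA S) (pr2 (LA S) ∘ projT2 (cl c n))) ∘ v).
    transitivity (Ihom (pr2 (LA S)) ∘ (Ihom (projT2 (cl c n)) ∘ v)).
    - rewrite <- Hv, comp_assoc, Hpsi2. reflexivity.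
    - simpl. rewrite !comp_assoc, <- !I_comp, fac_comp. reflexivity. }
  apply Isub_sle. exact (sle_trans Hn2 (sle_trans Hcomp Hm2)).
Qed.

Lemma lift_compact_of_R_compact (HEpb : E_pullback_stable S) (HFE : F_sub_E S) (x : CX S) :
  R_preserves_products_with x -> inE (FX S) (rho x) ->
  compact (LA S) (FA S) (@cl _ _ c) (Rob x) -> compact (LX S) (FX S) (lift c) x.
Proof.
  intros Hpres HE HRx y m Hm. split; [apply lift_cont|].
  set (t := img (FX S) (pr2 (LX S)) m).
  set (kn := cl c (img (FA S) (Rcmp x y) (npart (FA S) (Rhom (projT2 m))))).
  set (k := projT2 kn).
  assert (Ht : sle (Rcl t) (img (FA S) (pr2 (LA S)) kn)).
  { eapply sle_trans; [|exact (proj2 (HRx _ _ (img_M _ _ _)))].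
    apply cl_mono; [apply npart_M | apply img_M | apply R_img_pr2]. }
  destruct Ht as [j1 Hj1].
  destruct (rho_lift t) as [v Hv].
  destruct (pb_E_cover HEpb (Ihom j1 ∘ v) (HFE _ _ _ (fac_eE (FA S) (pr2 (LA S) ∘ k))))
    as [P1 [e1 [w1 [He1 Hw1]]]].
  destruct (pb_E_cover HEpb (Ihom (pr1 (LA S) ∘ k) ∘ w1) HE) as [P2 [e2 [u [He2 Hu]]]].
  set (l := projT2 (lift c t)) in *.
  destruct (lift_intro_prod (Hpres y) (cl_img_iso c (Hpres y) (npart_M _ _))
              (u := pair (LX S) u (l ∘ (e1 ∘ e2))) (w := w1 ∘ e2)) as [j Hj].
  - rewrite pair_pr1, comp_assoc. symmetry. exact Hu.
  - rewrite pair_pr2, !comp_assoc. f_equal.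
    transitivity ((Ihom (projT2 (Rcl t)) ∘ v) ∘ e1);
      [f_equal; exact Hv|].
    transitivity (Ihom (fac_m (FA S) (pr2 (LA S) ∘ k)) ∘ ((Ihom j1 ∘ v) ∘ e1)).
    + rewrite !comp_assoc, <- I_comp. do 3 f_equal. exact Hj1.
    + rewrite Hw1, comp_assoc, <- I_comp. do 2 f_equal. apply fac_comp.
  - apply (factor_M_of_E (comp_E He2 He1) (fac_mM _ _)
             (u := fac_e (FX S) (pr2 (LX S) ∘ projT2 (lift c m)) ∘ j)).
    symmetry. rewrite comp_assoc, fac_comp, <- comp_assoc.
    transitivity (pr2 (LX S) ∘ pair (LX S) u (l ∘ (e1 ∘ e2))); [f_equal; symmetry; exact Hj|].
    apply pair_pr2.
Qed.

End Lift.

Theorem corollary2p11 (S : Setting)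
  (HEpb : E_pullback_stable S) (HFE : F_sub_E S)
  (c : ClosureOp (CA S) (FA S))
  (Hsep : forall a : CA S, separated (LA S) (FA S) (@cl _ _ c) a)
  (x : CX S) (Hpres : R_preserves_products_with x) :
  compact (LX S) (FX S) (lift c) x <->
  (inE (FX S) (rho x) /\ compact (LA S) (FA S) (@cl _ _ c) (Rob x)).
Proof.
  split.
  - intros Hx.
    assert (HE : inE (FX S) (rho x)) by exact (rho_E_of_lift_compact (Hsep (Rob x)) Hx).
    split; [exact HE | exact (R_compact_of_lift_compact HEpb HE Hx)].
  - intros [HE HRx]. exact (lift_compact_of_R_compact HEpb HFE Hpres HE HRx).
Qed.
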